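(* Let $1\le k\le n$, $c\in\mathrm{GRS}(\alpha,u,k)$, $e\in\mathbb{E}^n$ of Hamming weight $t\le\lfloor (n-k)/2\rfloor$, and $r=c+e$. Run the following procedure on $r$: D1–D2: set $A\leftarrow0$, $B\leftarrow\eta$, $C\leftarrow1$, $D\leftarrow -h_{r'}$. D3: if $\deg C+k-1\ge\deg D$, go to D6. D4: set $d\leftarrow\deg D-\deg B$ and $\gamma\leftarrow\mathrm{LC}(D)\mathrm{LC}(B)^{-1}$. D5: if $d\ge0$, set $C\leftarrow C-\gamma x^dA$, $D\leftarrow D-\gamma x^dB$; if $d<0$, simultaneously set $(A,B,C,D)\leftarrow(C,\ D,\ x^{-d}C-\gamma A,\ x^{-d}D-\gamma B)$ (using the old values on the right). Return to D3. D6: output $(u_1P(\alpha_1),\dots,u_nP(\alpha_n))$ where $P=-D/C$. Then the procedure terminates, at termination $C$ divides $D$ in $\mathbb{E}[x]$, $-D/C$ is the polynomial $h_{c'}$ of degree $<k$ with $c=(u_1h_{c'}(\alpha_1),\dots,u_nh_{c'}(\alpha_n))$, and the output equals $c$.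
   Context: $\mathbb{E}$ is a finite field, $\alpha_1,\dots,\alpha_n\in\mathbb{E}$ pairwise distinct, $u_1,\dots,u_n\in\mathbb{E}$ nonzero. $\mathrm{GRS}(\alpha,u,k)=\{(u_1f(\alpha_1),\dots,u_nf(\alpha_n)) : f\in\mathbb{E}[x],\ \deg f<k\}$. For $1\le i\le n$, $\tilde h_i=\prod_{j\ne i}(x-\alpha_j)$, $h_i=\tilde h_i(\alpha_i)^{-1}\tilde h_i$; $h_{r'}=\sum_{i=1}^n r_iu_i^{-1}h_i$ and $\eta=\prod_{i=1}^n(x-\alpha_i)$. $\deg$ is degree in $x$ with $\deg0=-\infty$; $\mathrm{LC}$ denotes leading coefficient. *)

From HB Require Import structures.
From mathcomp Require Import all_boot all_order all_algebra all_field.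
Set Implicit Arguments. Unset Strict Implicit. Unset Printing Implicit Defensive.
Import Order.TTheory GRing.Theory Num.Theory.
Local Open Scope ring_scope.

Section GRSDecoder.
Variables (E : fieldType) (n : nat) (alpha u : 'I_n -> E).

Definition inGRS (k : nat) (c : 'I_n -> E) : Prop :=
  exists f : {poly E}, (size f <= k)%N /\ forall i, c i = u i * f.[alpha i].

Definition hamming_wt (e : 'I_n -> E) : nat := #|[set i | e i != 0]|.

Definition htilde (i : 'I_n) : {poly E} :=
  \prod_(j < n | j != i) ('X - (alpha j)%:P).
Definition hbasis (i : 'I_n) : {poly E} := ((htilde i).[alpha i])^-1 *: htilde i.
Definition eta : {poly E} := \prod_(j < n) ('X - (alpha j)%:P).

Definition hvec (r : 'I_n -> E) : {poly E} :=
  \sum_(i < n) (r i * (u i)^-1) *: hbasis i.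

Definition dstate := ({poly E} * {poly E} * {poly E} * {poly E})%type.

Definition dinit (r : 'I_n -> E) : dstate := (0, eta, 1, - hvec r).

(* D3 test: deg C + k - 1 >= deg D, with deg 0 = -oo (and k >= 1) *)
Definition dstop (k : nat) (s : dstate) : bool :=
  let: (A, B, C, D) := s in
  (D == 0) || ((C != 0) && (size D < size C + k)%N).

Definition dstep (s : dstate) : dstate :=
  let: (A, B, C, D) := s in
  let d : int := (size D)%:Z - (size B)%:Z in
  let g := lead_coef D * (lead_coef B)^-1 in
  if (0 <= d)%R then
    (A, B, C - g *: ('X^(absz d) * A), D - g *: ('X^(absz d) * B))
  else
    (C, D, 'X^(absz d) * C - g *: A, 'X^(absz d) * D - g *: B).

Definition dC (s : dstate) : {poly E} := let: (_, _, C, _) := s in C.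
Definition dD (s : dstate) : {poly E} := let: (_, _, _, D) := s in D.

Definition doutput (s : dstate) : 'I_n -> E :=
  let P := - (dD s %/ dC s) in fun i => u i * P.[alpha i].

End GRSDecoder.

From Pilot Require Import Defs.
From mathcomp Require Import all_boot all_order all_algebra all_field.
From mathcomp Require Import zify ring.
From Stdlib Require Import FunctionalExtensionality.
Import Order.TTheory GRing.Theory Num.Theory.
Set Implicit Arguments. Unset Strict Implicit.
Local Open Scope ring_scope.

(* Write h = h_{r'} and f = h_{c'}.  Every state (A, B, C, D) of the loop satisfies
   the key congruences B = -A h and D = -C h modulo eta, together with
   size C + size B = n + 2, size A + size D <= n + 1 and, unless A = 0,
   size A + k <= size B; each step strictly decreases size B + size D, so the loop
   stops.  If Lambda is the error locator, then Lambda (h - f) = Lambda h_{e'} is a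
   multiple of eta, so every congruence Y = -X h yields eta | Lambda (Y + X f).
   At the stopping state the size bounds make Lambda (B + A f) and then
   Lambda (D + C f) too small to be nonzero multiples of eta; the first forces
   size B > t + k, and the second gives D = -C f. *)

Section PolyFacts.
Variable F : fieldType.
Implicit Types p q : {poly F}.

Lemma size_sub_lead p q : size p = size q -> q != 0 ->
  (size (p - (lead_coef p / lead_coef q) *: q)%R < size p)%N.
Proof.
move=> spq q0; have sp : (0 < size p)%N by rewrite spq size_poly_gt0.
rewrite -[ltnRHS](prednK sp) ltnS; apply/leq_sizeP => j.
rewrite leq_eqVlt => /predU1P [<- | lt_j].
  by rewrite coefB coefZ {2}spq -!lead_coefE divfK ?subrr // lead_coef_eq0.
by rewrite coefB coefZ !nth_default ?mulr0 ?subr0 // -?spq -(prednK sp).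
Qed.

Lemma eq0_dvdp_small (m L q : {poly F}) :
  m %| L * q -> L != 0 -> (size L + size q <= size m)%N -> q = 0.
Proof.
move=> dvd_m L0 small; apply/eqP; apply: contraTT dvd_m => q0.
apply/negP => /(dvdp_leq (mulf_neq0 L0 q0)); apply/negP; rewrite -ltnNge size_mul //.
by apply: leq_trans small; rewrite prednK // addn_gt0 size_poly_gt0 L0.
Qed.

Lemma size_add_mul_leq p q (f : {poly F}) m :
  (size p <= m)%N -> (size q + size f <= m.+1)%N -> (size (p + q * f)%R <= m)%N.
Proof.
move=> sp sqf; apply: leq_trans (size_polyD _ _) _; rewrite geq_max sp.
by apply: leq_trans (size_polyMleq _ _) _; lia.
Qed.

Lemma size_mul_ltn p q m : q != 0 -> (size q <= m)%N -> (size (p * q)%R < size p + m)%N.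
Proof.
move=> q0 sq; have : (0 < size q)%N by rewrite size_poly_gt0.
move=> sq0; apply: leq_ltn_trans (size_polyMleq p q) _; lia.
Qed.

Lemma size_prod_XsubC_pred n (alpha : 'I_n -> F) (P : pred 'I_n) :
  size (\prod_(j < n | P j) ('X - (alpha j)%:P)) = #|P|.+1.
Proof.
by rewrite -big_filter size_prod_XsubC cardE.
Qed.

End PolyFacts.

Section Interpolation.
Variables (F : fieldType) (n : nat) (alpha u : 'I_n -> F).
Hypothesis alpha_inj : injective alpha.

Lemma size_eta : size (Defs.eta alpha) = n.+1.
Proof. by rewrite size_prod_XsubC_pred cardT size_enum_ord. Qed.

Lemma eta_neq0 : Defs.eta alpha != 0.
Proof. by rewrite -size_poly_eq0 size_eta. Qed.

Lemma size_htilde i : size (htilde alpha i) = n.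
Proof. by rewrite size_prod_XsubC_pred cardC1 card_ord prednK // (leq_ltn_trans (leq0n i)). Qed.

Lemma eta_htilde i : Defs.eta alpha = ('X - (alpha i)%:P) * htilde alpha i.
Proof. by rewrite /Defs.eta (bigD1 i). Qed.

Lemma hbasis_eval i j : (hbasis alpha i).[alpha j] = (i == j)%:R.
Proof.
rewrite /hbasis hornerZ /htilde !horner_prod.
have [<- | neq_ij] := eqVneq i j.
  rewrite mulVf //; apply/prodf_neq0 => k neq_ki.
  by rewrite hornerXsubC subr_eq0 (inj_eq alpha_inj) eq_sym.
apply/eqP; rewrite mulf_eq0; apply/orP; right; apply/prodf_eq0.
by exists j; rewrite 1?eq_sym // hornerXsubC subrr.
Qed.

Lemma size_hvec r : (size (hvec alpha u r) <= n)%N.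
Proof.
rewrite /hvec; elim/big_ind: _ => [|p q sp sq|i _]; first by rewrite size_poly0.
  by apply: leq_trans (size_polyD _ _) _; rewrite geq_max sp.
by rewrite (leq_trans (size_scale_leq _ _)) // (leq_trans (size_scale_leq _ _)) ?size_htilde.
Qed.

Lemma hvecD r1 r2 : hvec alpha u (fun i => r1 i + r2 i) = hvec alpha u r1 + hvec alpha u r2.
Proof. by rewrite /hvec -big_split; apply: eq_bigr => i _; rewrite mulrDl scalerDl. Qed.

Definition err_locator (e : 'I_n -> F) : {poly F} :=
  \prod_(j < n | e j != 0) ('X - (alpha j)%:P).

Lemma size_err_locator e : size (err_locator e) = (hamming_wt e).+1.
Proof. by rewrite size_prod_XsubC_pred /hamming_wt cardsE. Qed.

Lemma eta_dvd_err_locator_hvec e : Defs.eta alpha %| err_locator e * hvec alpha u e.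
Proof.
rewrite /hvec mulr_sumr; elim/big_ind: _ => [|p q|i _]; [exact: dvdp0 | exact: dvdp_add |].
have [-> | e_i] := eqVneq (e i) 0; first by rewrite mul0r scale0r mulr0 dvdp0.
rewrite /hbasis -!scalerAr -!mul_polyC; do 2 apply: dvdp_mull.
rewrite /err_locator (bigD1 i) //= (eta_htilde i) mulrAC; exact: dvdp_mulIl.
Qed.

Hypothesis u_neq0 : forall i, u i != 0.

Lemma hvec_eval (g : {poly F}) (c : 'I_n -> F) :
  (size g <= n)%N -> (forall i, c i = u i * g.[alpha i]) -> hvec alpha u c = g.
Proof.
move=> sg cE; apply/eqP; rewrite -subr_eq0; apply/eqP.
apply: (@roots_geq_poly_eq0 _ _ [seq alpha j | j <- enum 'I_n]).
- apply/allP => _ /mapP [j _ ->]; rewrite /root hornerD hornerN horner_sum.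
  rewrite (bigD1 j) //= big1 => [|i /negbTE neq_ij]; last first.
    by rewrite hornerZ hbasis_eval neq_ij mulr0.
  by rewrite hornerZ hbasis_eval eqxx cE mulr1 addr0 mulrAC mulfV // mul1r subrr.
- by rewrite map_inj_uniq ?enum_uniq.
- rewrite size_map size_enum_ord; apply: leq_trans (size_polyD _ _) _.
  by rewrite size_polyN geq_max sg size_hvec.
Qed.

End Interpolation.

Lemma iter_until (T : Type) (f : T -> T) (stop : pred T) (P : T -> Prop) (mu : T -> nat) :
  (forall s, P s -> ~~ stop s -> P (f s) /\ (mu (f s) < mu s)%N) ->
  forall s, P s -> exists m,
    [/\ forall j, (j < m)%N -> ~~ stop (iter j f s), stop (iter m f s) & P (iter m f s)].
Proof.
move=> step s; have [b] := ubnP (mu s); elim: b s => // b IH s lt_s Ps.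
have [stop_s | nstop_s] := boolP (stop s); first by exists 0%N.
have [Pf lt_f] := step s Ps nstop_s.
have [m [nstop stop_m Pm]] := IH (f s) (leq_trans lt_f lt_s) Pf.
exists m.+1; split; rewrite ?iterSr //.
by case=> [|j] //; rewrite ltnS iterSr; apply: nstop.
Qed.

Section KeyEquation.
Variables (F : fieldType) (N k : nat) (et h : {poly F}).

Definition dinv (s : dstate F) : Prop :=
  let: (A, B, C, D) := s in
  [/\ et %| B + A * h, et %| D + C * h, B != 0, C != 0 &
      [/\ (size C + size B = N.+2)%N, (size A + size D <= N.+1)%N
        & (A == 0) || (size A + k <= size B)%N]].

Definition dsize (s : dstate F) : nat := let: (_, B, _, D) := s in (size B + size D)%N.

Lemma dvdp_keyeq_comb (x y A B C D : {poly F}) :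
  et %| B + A * h -> et %| D + C * h -> et %| (x * D - y * B) + (x * C - y * A) * h.
Proof.
move=> dvdB dvdD.
have -> : (x * D - y * B) + (x * C - y * A) * h = x * (D + C * h) - y * (B + A * h) by ring.
by rewrite dvdp_sub ?dvdp_mull.
Qed.

Lemma dinv_reduce A B C D : dinv (A, B, C, D) -> (size B <= size D)%N ->
  let g := lead_coef D / lead_coef B in let p := (size D - size B)%N in
  dinv (A, B, C - g *: ('X^p * A), D - g *: ('X^p * B)) /\
  (size (D - g *: ('X^p * B))%R < size D)%N.
Proof.
case=> dvdB dvdD B0 C0 [sCB sAD sA] le_BD g p.
have XpB0 : 'X^p * B != 0 by rewrite mulf_neq0 ?expf_neq0 ?polyX_eq0.
have sXpB : size ('X^p * B) = size D by rewrite mulrC size_mulXn // subnK.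
have lXpB : lead_coef ('X^p * B) = lead_coef B by rewrite lead_coefM lead_coefXn mul1r.
have sD' : (size (D - g *: ('X^p * B))%R < size D)%N.
  by rewrite /g -lXpB size_sub_lead.
have sA' : (size (g *: ('X^p * A))%R < size C)%N.
  apply: leq_ltn_trans (size_scale_leq _ _) _.
  have [-> | A0] := eqVneq A 0; first by rewrite mulr0 size_poly0 size_poly_gt0.
  rewrite mulrC size_mulXn // /p; lia.
have sC' : size (C - g *: ('X^p * A)) = size C by rewrite size_polyDl ?size_polyN.
split=> //; split=> //.
- by have := dvdp_keyeq_comb 1 (g *: 'X^p) dvdB dvdD; rewrite !mul1r -!scalerAl.
- by rewrite -size_poly_eq0 sC' size_poly_eq0.
- by rewrite sC'; split=> //; lia.
Qed.

Lemma dinv_swap A B C D : dinv (A, B, C, D) -> (size C + k <= size D)%N ->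
  (size D < size B)%N ->
  let g := lead_coef D / lead_coef B in let p := (size B - size D)%N in
  dinv (C, D, 'X^p * C - g *: A, 'X^p * D - g *: B) /\
  (size ('X^p * D - g *: B)%R < size B)%N.
Proof.
case=> dvdB dvdD B0 C0 [sCB sAD sA] le_CD lt_DB g p.
have D0 : D != 0 by rewrite -size_poly_eq0 -lt0n (leq_trans _ le_CD) // addn_gt0 size_poly_gt0 C0.
have sXpD : size ('X^p * D) = size B by rewrite mulrC size_mulXn // subnK // ltnW.
have sXpC : size ('X^p * C) = (size C + p)%N by rewrite mulrC size_mulXn // addnC.
have lXpD : lead_coef ('X^p * D) = lead_coef D by rewrite lead_coefM lead_coefXn mul1r.
have sD' : (size ('X^p * D - g *: B)%R < size B)%N.
  by rewrite -[ltnRHS]sXpD /g -lXpD size_sub_lead.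
have sA_lt : (size A < size C + p)%N by rewrite /p; lia.
have sC' : size ('X^p * C - g *: A) = (size C + p)%N.
  by rewrite size_polyDl ?size_polyN // sXpC (leq_ltn_trans (size_scale_leq _ _)).
split=> //; split=> //.
- by have := dvdp_keyeq_comb 'X^p g%:P dvdB dvdD; rewrite !mul_polyC.
- by rewrite -size_poly_eq0 sC' addn_eq0 size_poly_eq0 negb_and C0.
- by split; [rewrite sC' /p; lia | lia | rewrite le_CD orbT].
Qed.

Lemma dstep_dinv s :
  dinv s -> ~~ dstop k s -> dinv (dstep s) /\ (dsize (dstep s) < dsize s)%N.
Proof.
case: s => [[[A B] C] D] I; have [_ _ _ C0 _] := I.
rewrite /dstop C0 negb_or /= -leqNgt => /andP [_ le_CD]; rewrite /dstep.
case: ifP => [| /negbT]; rewrite subr_ge0.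
  rewrite lez_nat => le_BD; rewrite distnEl //.
  by have [I' lt'] := dinv_reduce I le_BD; split; rewrite //= ltn_add2l.
rewrite -ltNge ltz_nat => lt_DB; rewrite distnEr ?(ltnW lt_DB) //.
by have [I' lt'] := dinv_swap I le_CD lt_DB; split; rewrite //= addnC ltn_add2r.
Qed.

Lemma dinv_dC_neq0 s : dinv s -> dC s != 0.
Proof. by case: s => [[[A B] C] D] []. Qed.

Section Termination.
Variables (L f : {poly F}) (t : nat).
Hypotheses (size_et : size et = N.+1) (L0 : L != 0) (size_L : size L = t.+1)
  (tk_N : (t + t + k <= N)%N) (size_f : (size f <= k)%N) (dvd_Lhf : et %| L * (h - f)).

Lemma dvdp_keyeq_transfer X Y : et %| Y + X * h -> et %| L * (Y + X * f).
Proof.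
move=> dvdY; have -> : L * (Y + X * f) = L * (Y + X * h) - X * (L * (h - f)) by ring.
by apply: dvdp_sub; apply: dvdp_mull.
Qed.

Lemma keyeq_small_solution X Y :
  et %| Y + X * h -> (size (Y + X * f)%R <= N - t)%N -> Y = - (X * f).
Proof.
move=> dvdY small; apply/eqP; rewrite -addr_eq0; apply/eqP.
apply: eq0_dvdp_small (dvdp_keyeq_transfer dvdY) L0 _; rewrite size_et size_L; lia.
Qed.

Lemma dinv_size_B A B C D : dinv (A, B, C, D) -> (t + k < size B)%N.
Proof.
case=> dvdB _ B0 _ [_ _ sA]; rewrite ltnNge; apply/negP => small_B.
have sBAf : (size (B + A * f)%R <= size B)%N.
  case/orP: sA => [/eqP -> | sA]; first by rewrite mul0r addr0.
  by apply: size_add_mul_leq => //; apply: leq_trans (leqW sA); rewrite leq_add2l.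
have eB : B = - (A * f) by apply: keyeq_small_solution dvdB (leq_trans sBAf _); lia.
have A0 : A != 0 by apply: contraNneq B0 => A0; rewrite eB A0 mul0r oppr0.
have f0 : f != 0 by apply: contraNneq B0 => f0; rewrite eB f0 mulr0 oppr0.
move: sA; rewrite (negPf A0) /= eB size_polyN => sA.
by have := leq_ltn_trans sA (size_mul_ltn A f0 size_f); rewrite ltnn.
Qed.

Lemma dstop_solution s : dinv s -> dstop k s -> dD s = - (dC s * f).
Proof.
case: s => [[[A B] C] D] I stop /=; have := dinv_size_B I.
case: I => _ dvdD _ _ [sCB _ _] sB; apply: keyeq_small_solution dvdD _.
apply: size_add_mul_leq; last lia.
by case/orP: stop => [/eqP -> | /andP [_ sD]]; [rewrite size_poly0 | lia].
Qed.

End Termination.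

End KeyEquation.

Lemma dinit_dinv (F : fieldType) n k (alpha u r : 'I_n -> F) :
  dinv n k (Defs.eta alpha) (hvec alpha u r) (dinit alpha u r).
Proof.
split; rewrite ?mul0r ?addr0 ?mul1r ?addNr ?dvdp0 ?eta_neq0 ?oner_neq0 //.
split; rewrite ?size_poly1 ?size_eta ?size_poly0 ?size_polyN ?eqxx //.
exact: leq_trans (size_hvec _ _ _) _.
Qed.

Theorem mainTheorem6 (E : finFieldType) (n k : nat) (alpha u : 'I_n -> E)
  (Halpha : injective alpha) (Hu : forall i, u i != 0)
  (Hk1 : (1 <= k)%N) (Hkn : (k <= n)%N)
  (c e : 'I_n -> E) (Hc : inGRS alpha u k c)
  (He : (hamming_wt e <= (n - k) %/ 2)%N) :
  let r := fun i => c i + e i in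
  exists m : nat,
    [/\ forall j, (j < m)%N -> ~~ dstop k (iter j (@dstep E) (dinit alpha u r)),
        dstop k (iter m (@dstep E) (dinit alpha u r))
      & let s := iter m (@dstep E) (dinit alpha u r) in
        [/\ dC s %| dD s,
            - (dD s %/ dC s) = hvec alpha u c,
            (size (hvec alpha u c) <= k)%N,
            (forall i, c i = u i * (hvec alpha u c).[alpha i])
          & doutput alpha u s = c]].
Proof.
move=> r; have [g [size_g cE]] := Hc.
have hc : hvec alpha u c = g := hvec_eval Halpha Hu (leq_trans size_g Hkn) cE.
have [m [nstop stop Im]] := iter_until (@dstep_dinv _ n k _ _) (dinit_dinv k alpha u r).
exists m; split => //; set s := iter m _ _ in stop Im *.
have dvd_err : Defs.eta alpha %| err_locator alpha e * (hvec alpha u r - g).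
  by rewrite hvecD hc addrC addKr eta_dvd_err_locator_hvec.
have L0 : err_locator alpha e != 0 by rewrite -size_poly_eq0 size_err_locator.
have tk_n : (hamming_wt e + hamming_wt e + k <= n)%N by lia.
have eD := dstop_solution (size_eta alpha) L0 (size_err_locator alpha e) tk_n size_g
  dvd_err Im stop.
have eP : - (dD s %/ dC s) = g by rewrite eD -mulrN mulrC mulpK ?opprK ?(dinv_dC_neq0 Im).
rewrite hc; split => //; first by rewrite eD -mulrN dvdp_mulIl.
by apply: functional_extensionality => i; rewrite /doutput eP cE.
Qed.
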